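(* (1) For any $\mu,\lambda\in(0,1)$: $\mathbb{L}^{>0}(\mathrm{QBA}|\mathrm{ND})\subseteq\mathbb{L}^{>\mu}(\mathrm{QBA}|\mathrm{ND})=\mathbb{L}^{>\lambda}(\mathrm{QBA}|\mathrm{ND})$. (2) For any $\mu,\lambda\in(0,1)$: $\mathbb{L}^{=1}(\mathrm{QBA}|\mathrm{ND})\subseteq\mathbb{L}^{\ge\mu}(\mathrm{QBA}|\mathrm{ND})=\mathbb{L}^{\ge\lambda}(\mathrm{QBA}|\mathrm{ND})$. (3) For any $\lambda\in[0,1)$: $\mathbb{L}^{=1}(\mathrm{QBA}|\mathrm{ND})\not\subseteq\mathbb{L}^{>\lambda}(\mathrm{QBA}|\mathrm{ND})$.
   Context: A quantum automaton is a tuple $\mathcal{A}=(\mathcal{H},|s_0\rangle,\Sigma,\{U_\sigma:\sigma\in\Sigma\},F)$ where $\mathcal{H}$ is a finite-dimensional complex Hilbert space, $|s_0\rangle$ a unit vector, $\Sigma$ a finite alphabet, each $U_\sigma$ unitary, and $F$ a subspace. For $w\in\Sigma^\omega$ with length-$n$ prefixes $w_n$, the non-disturbing run is $|s_n\rangle=U_{w_n}|s_0\rangle$ where $U_{\sigma_1\cdots\sigma_m}=U_{\sigma_m}\cdots U_{\sigma_1}$, and $f^{\mathrm{ND}}_{\mathcal{A}}(w)=\sup_{|\psi\rangle\in F,\||\psi\rangle\|=1}\sup_{\{n_i\}}\inf_{i\ge1}|\langle\psi|s_{n_i}\rangle|^2$ over strictly increasing sequences $0\le n_1<n_2<\cdots$.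 Languages: $\mathcal{L}^{>0}(\mathcal{A}|\mathrm{ND})=\{w: f^{\mathrm{ND}}_{\mathcal{A}}(w)>0\}$, $\mathcal{L}^{=1}(\mathcal{A}|\mathrm{ND})=\{w:f^{\mathrm{ND}}_{\mathcal{A}}(w)=1\}$, $\mathcal{L}^{>\lambda}(\mathcal{A}|\mathrm{ND})=\{w:f^{\mathrm{ND}}_{\mathcal{A}}(w)>\lambda\}$, $\mathcal{L}^{\ge\lambda}(\mathcal{A}|\mathrm{ND})=\{w:f^{\mathrm{ND}}_{\mathcal{A}}(w)\ge\lambda\}$ (subsets of $\Sigma^\omega$). For each such semantics $\bowtie$, $\mathbb{L}^{\bowtie}(\mathrm{QBA}|\mathrm{ND})$ is the class of all languages $\mathcal{L}^{\bowtie}(\mathcal{A}|\mathrm{ND})$ as $\mathcal{A}$ ranges over all quantum automata. *)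

From HB Require Import structures.
From mathcomp Require Import all_boot all_order all_algebra.
From mathcomp Require Import classical_sets reals.
From mathcomp Require Import complex.
From mathcomp Require Import Rstruct.
Set Implicit Arguments. Unset Strict Implicit. Unset Printing Implicit Defensive.
Import Order.TTheory GRing.Theory Num.Theory.
Local Open Scope ring_scope.
Local Open Scope classical_set_scope.

Definition RR : realType := Rdefinitions.R.
Definition CC := (RR : rcfType)[i].

Definition adj {m n} (A : 'M[CC]_(m, n)) : 'M[CC]_(n, m) :=
  (map_mx (fun x : CC => conjc x) A)^T.

Definition inner {d} (psi s : 'cV[CC]_d) : CC := (adj psi *m s) 0 0.

Definition abs2 (x : CC) : RR := (Normc.normc x) ^+ 2.

Definition unitary {d} (U : 'M[CC]_d) : Prop := U *m adj U = 1%:M.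

(* A quantum automaton over the alphabet Sigma: Hilbert space C^dim,
   initial unit vector s0, unitaries U, accepting subspace F given as the
   row space of the matrix Fsp (vectors psi with psi^T in the row space). *)
Record QA (Sigma : finType) := {
  dim : nat;
  s0 : 'cV[CC]_dim;
  U : Sigma -> 'M[CC]_dim;
  Fsp : 'M[CC]_dim;
  s0_unit : inner s0 s0 = 1;
  U_unitary : forall a, unitary (U a)
}.

Definition in_F Sigma (A : QA Sigma) (psi : 'cV[CC]_(dim A)) : bool :=
  (psi^T <= Fsp A)%MS.

(* non-disturbing run: s_0 = s0, s_{n+1} = U_{w n} s_n
   (w n is the (n+1)-th letter sigma_{n+1}) *)
Fixpoint run Sigma (A : QA Sigma) (w : nat -> Sigma) (n : nat) : 'cV[CC]_(dim A) :=
  match n with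
  | 0 => s0 A
  | k.+1 => U A (w k) *m run A w k
  end.

Definition strictly_increasing (ns : nat -> nat) : Prop :=
  forall i, (ns i < ns i.+1)%N.

Definition fND Sigma (A : QA Sigma) (w : nat -> Sigma) : RR :=
  sup [set r : RR | exists psi : 'cV[CC]_(dim A),
        [/\ in_F psi, inner psi psi = 1 &
            r = sup [set t : RR | exists ns : nat -> nat,
                      strictly_increasing ns /\
                      t = inf [set u : RR | exists i : nat,
                                 u = abs2 (inner psi (run A w (ns i)))]]]].

Definition lang_gt0 Sigma (A : QA Sigma) : set (nat -> Sigma) := [set w | 0 < fND A w].
Definition lang_eq1 Sigma (A : QA Sigma) : set (nat -> Sigma) := [set w | fND A w = 1].
Definition lang_gt Sigma (lam : RR) (A : QA Sigma) : set (nat -> Sigma) :=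
  [set w | lam < fND A w].
Definition lang_ge Sigma (lam : RR) (A : QA Sigma) : set (nat -> Sigma) :=
  [set w | lam <= fND A w].

Definition QBA_class Sigma (L : QA Sigma -> set (nat -> Sigma)) : set (set (nat -> Sigma)) :=
  [set X | exists A : QA Sigma, X = L A].

(* Padding an automaton with one extra dimension, fixed by every letter and
   reached with amplitude [b] from the initial state (the old state getting
   amplitude [a], [a^2 + b^2 = 1]), turns the value [f] of every word into
   [a^2 f] if the new direction is rejected and into [a^2 f + b^2] if it is
   accepted.  These affine maps carry any threshold in [0, 1] to any threshold
   in (0, 1), which gives (1) and (2).  The accepting case needs a subsequence
   along which the overlaps [<psi|s_n>] have an almost constant phase; a
   pigeonhole over a finite grid of the unit disc provides it.

   For (3): by Poincare recurrence of unitary orbits, if [f_B(a^omega) > lam]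
   then [f_B(a^n b^omega) > lam] for some [n > 0] and every letter [b].  The
   two-dimensional automaton that rotates by [arccos (3/5)] on [a], fixes the
   other letters and accepts the line of its initial state gives [a^omega] the
   value 1 (recurrence again), but every [a^n b^omega] a value [< 1], because
   no positive multiple of [arccos (3/5)] is a multiple of [pi]. *)

From Pilot Require Import Defs.
From mathcomp Require Import all_boot all_order all_algebra.
From mathcomp Require Import boolp classical_sets reals complex Rstruct.
From mathcomp Require Import ring lra zify.
Set Implicit Arguments. Unset Strict Implicit. Unset Printing Implicit Defensive.
Import Order.TTheory GRing.Theory Num.Theory.
Local Open Scope ring_scope.
Local Open Scope classical_set_scope.
Local Open Scope complex_scope.

Notation normc := (@Normc.normc RR).

Lemma abs2E (x : CC) : abs2 x = complex.Re x ^+ 2 + complex.Im x ^+ 2.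
Proof. by case: x => a b; rewrite /abs2 sqr_sqrtr // addr_ge0 // sqr_ge0. Qed.

Lemma abs2_ge0 (x : CC) : 0 <= abs2 x.
Proof. by rewrite abs2E addr_ge0 // sqr_ge0. Qed.

Lemma abs2M (x y : CC) : abs2 (x * y) = abs2 x * abs2 y.
Proof. by rewrite /abs2 Normc.normcM exprMn. Qed.

Lemma normc_conj (x : CC) : normc (conjc x) = normc x.
Proof. by case: x => a b; rewrite /Normc.normc /= sqrrN. Qed.

Lemma abs2J (x : CC) : abs2 (conjc x) = abs2 x.
Proof. by rewrite /abs2 normc_conj. Qed.

Lemma abs2R (r : RR) : abs2 r%:C = r ^+ 2.
Proof. by rewrite abs2E /= expr0n addr0. Qed.

Lemma abs2_eq0 (x : CC) : (abs2 x == 0) = (x == 0).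
Proof.
apply/idP/eqP => [|->]; last by rewrite (abs2R 0) expr0n.
by rewrite /abs2 expf_eq0 /= => /eqP /Normc.eq0_normc.
Qed.

Lemma abs20 : abs2 0 = 0.
Proof. by apply/eqP; rewrite abs2_eq0. Qed.

Lemma mulJc (x : CC) : conjc x * x = (abs2 x)%:C.
Proof.
case: x => a b; rewrite abs2E /=.
by apply/eqP; rewrite eq_complex /=; apply/andP; split; apply/eqP; ring.
Qed.

Lemma normc_ge0 (x : CC) : 0 <= normc x.
Proof. by case: x => a b; rewrite /Normc.normc sqrtr_ge0. Qed.

Lemma normcR (r : RR) : 0 <= r -> normc r%:C = r.
Proof. by move=> r0; rewrite /Normc.normc /= expr0n addr0 sqrtr_sqr ger0_norm. Qed.

Lemma normc_le1 (x : CC) : abs2 x <= 1 -> normc x <= 1.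
Proof. by move=> h; have := normc_ge0 x; rewrite /abs2 in h; nra. Qed.

Lemma abs2_le1_parts (x : CC) :
  abs2 x <= 1 -> -1 <= complex.Re x <= 1 /\ -1 <= complex.Im x <= 1.
Proof.
rewrite abs2E => h; have := sqr_ge0 (complex.Re x); have := sqr_ge0 (complex.Im x).
by split; apply/andP; split; nra.
Qed.

(* The reverse triangle inequality [|y| >= |x| - |x - y|], squared. *)
Lemma abs2_sub_ge (x y : CC) : abs2 x - 2 * normc x * normc (x - y) <= abs2 y.
Proof.
have tri : normc x <= normc y + normc (x - y).
  by have := le_normcD y (x - y); rewrite addrC subrK.
rewrite /abs2; have := normc_ge0 x; have := normc_ge0 y; have := normc_ge0 (x - y).
set nx := normc x in tri *; set ny := normc y in tri *; set nd := normc _ in tri *.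
move=> nd0 ny0 nx0; have [le_xd|lt_dx] := lerP nx nd; first nra.
have : (nx - nd) ^+ 2 <= ny ^+ 2 by rewrite ler_pXn2r ?nnegrE //; lra.
nra.
Qed.

Lemma abs2_dot2_le (p q x y : CC) :
  abs2 (p * x + q * y) <= (abs2 p + abs2 q) * (abs2 x + abs2 y).
Proof.
have -> : (abs2 p + abs2 q) * (abs2 x + abs2 y) =
          abs2 (p * x + q * y) + abs2 (conjc p * y - conjc q * x).
  case: p => p1 p2; case: q => q1 q2; case: x => x1 x2; case: y => y1 y2.
  by rewrite !abs2E /=; ring.
by rewrite lerDl abs2_ge0.
Qed.

Lemma ler_mul_amgm (e x y : RR) : 0 < e -> x * y <= (e * x ^+ 2 + y ^+ 2 / e) / 2.
Proof.
move=> e0; have -> : (e * x ^+ 2 + y ^+ 2 / e) / 2 = x * y + (e * x - y) ^+ 2 / e / 2.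
  by field; rewrite gt_eqF.
by rewrite lerDl !divr_ge0 ?sqr_ge0 // ltW.
Qed.

Lemma adjM m n p (A : 'M[CC]_(m, n)) (B : 'M[CC]_(n, p)) : adj (A *m B) = adj B *m adj A.
Proof. by rewrite /adj map_mxM trmx_mul. Qed.

Lemma unitary_adjl d (V : 'M[CC]_d) : unitary V -> adj V *m V = 1%:M.
Proof. by move/mulmx1C. Qed.

Lemma unitary1 d : unitary (1%:M : 'M[CC]_d).
Proof. by rewrite /unitary /adj map_mx1 trmx1 mul1mx. Qed.

Lemma unitary_block1 n (V : 'M[CC]_n) : unitary V -> unitary (block_mx V 0 0 (1%:M : 'M_1)).
Proof.
rewrite /unitary {2}/adj map_block_mx tr_block_mx !map_mx0 map_mx1 !trmx0 trmx1.
rewrite mulmx_block => ->.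
by rewrite !mulmx0 !mul0mx !addr0 add0r mul1mx -scalar_mx_block.
Qed.

Lemma innerE d (psi s : 'cV[CC]_d) : inner psi s = \sum_i conjc (psi i 0) * s i 0.
Proof. by rewrite /inner !mxE; apply: eq_bigr => i _; rewrite !mxE. Qed.

Lemma inner_unitary d (V : 'M[CC]_d) x y :
  unitary V -> inner (V *m x) (V *m y) = inner x y.
Proof. by move=> hV; rewrite /inner adjM -mulmxA (mulmxA (adj V)) unitary_adjl // mul1mx. Qed.

Lemma inner_run Sigma (A : QA Sigma) w n : inner (run A w n) (run A w n) = 1.
Proof.
by elim: n => [|n IH] /=; [exact: s0_unit | rewrite inner_unitary ?IH //; exact: U_unitary].
Qed.

Lemma inner_col_mx m n (u u' : 'cV[CC]_m) (v v' : 'cV[CC]_n) :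
  inner (col_mx u v) (col_mx u' v') = inner u u' + inner v v'.
Proof. by rewrite /inner /adj map_col_mx tr_col_mx mul_row_col mxE. Qed.

Lemma innerZl d k (u v : 'cV[CC]_d) : inner (k *: u) v = conjc k * inner u v.
Proof. by rewrite !innerE mulr_sumr; apply: eq_bigr => i _; rewrite mxE rmorphM mulrA. Qed.

Lemma innerZr d k (u v : 'cV[CC]_d) : inner u (k *: v) = k * inner u v.
Proof. by rewrite !innerE mulr_sumr; apply: eq_bigr => i _; rewrite mxE mulrCA. Qed.

Lemma innerBr d (u v v' : 'cV[CC]_d) : inner u (v - v') = inner u v - inner u v'.
Proof. by rewrite !innerE -sumrB; apply: eq_bigr => i _; rewrite !mxE mulrBr. Qed.

Lemma inner0l d (s : 'cV[CC]_d) : inner 0 s = 0.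
Proof. by rewrite innerE big1 // => i _; rewrite mxE rmorph0 mul0r. Qed.

Lemma inner_scalar (x y : CC) : inner x%:M y%:M = conjc x * y.
Proof. by rewrite innerE big_ord1 !mxE. Qed.

Definition norm2 d (u : 'cV[CC]_d) : RR := \sum_i abs2 (u i 0).

Lemma norm2_ge0 d (u : 'cV[CC]_d) : 0 <= norm2 u.
Proof. by apply: sumr_ge0 => i _; exact: abs2_ge0. Qed.

Lemma inner_norm2 d (u : 'cV[CC]_d) : inner u u = (norm2 u)%:C.
Proof. by rewrite innerE /norm2 rmorph_sum; apply: eq_bigr => i _; exact: mulJc. Qed.

Lemma norm2_unit d (u : 'cV[CC]_d) : inner u u = 1 -> norm2 u = 1.
Proof. by rewrite inner_norm2 => -[]. Qed.

Lemma norm2Z d k (u : 'cV[CC]_d) : norm2 (k *: u) = abs2 k * norm2 u.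
Proof. by rewrite /norm2 mulr_sumr; apply: eq_bigr => i _; rewrite mxE abs2M. Qed.

Lemma norm2_eq0 d (u : 'cV[CC]_d) : (norm2 u == 0) = (u == 0).
Proof.
rewrite psumr_eq0 => [|i _]; last exact: abs2_ge0.
apply/allP/eqP => [h|-> i _] /=.
  apply/matrixP => i j; rewrite (ord1 j) mxE; apply/eqP.
  by rewrite -abs2_eq0; exact: h (mem_index_enum i).
by rewrite mxE abs2_eq0.
Qed.

Lemma norm2_0 d : norm2 (0 : 'cV[CC]_d) = 0.
Proof. by apply/eqP; rewrite norm2_eq0. Qed.

Lemma abs2_coord_le d (u : 'cV[CC]_d) l : abs2 (u l 0) <= norm2 u.
Proof. by rewrite /norm2 (bigD1 l) //= lerDl sumr_ge0 // => i _; exact: abs2_ge0. Qed.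

Lemma normc_inner_le d (u v : 'cV[CC]_d) e : 0 < e ->
  normc (inner u v) <= (e * norm2 u + norm2 v / e) / 2.
Proof.
move=> e0; rewrite innerE; apply: le_trans (_ : \sum_i normc (conjc (u i 0) * v i 0) <= _).
  elim/big_rec2: _ => [|i x y _ IH]; first by rewrite Normc.normc0.
  by apply: le_trans (le_normcD _ _) _; rewrite lerD2l.
rewrite /norm2 mulr_sumr mulr_suml -big_split /= mulr_suml.
by apply: ler_sum => i _; rewrite Normc.normcM normc_conj; exact: ler_mul_amgm.
Qed.

Lemma abs2_inner_le1 d (u v : 'cV[CC]_d) :
  inner u u = 1 -> inner v v = 1 -> abs2 (inner u v) <= 1.
Proof.
move=> /norm2_unit hu /norm2_unit hv; have := normc_inner_le u v ltr01.
rewrite hu hv mul1r invr1 mulr1 => h; rewrite /abs2; have := normc_ge0 (inner u v); nra.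
Qed.

Lemma normc_inner_small d (u v : 'cV[CC]_d) eta : inner u u = 1 -> 0 < eta ->
  norm2 v <= eta ^+ 2 -> normc (inner u v) <= eta.
Proof.
move=> /norm2_unit hu eta0 hv; apply: le_trans (normc_inner_le u v eta0) _.
by rewrite hu mulr1 ler_pdivrMr // mulr2n mulrDr mulr1 lerD2l ler_pdivrMr // -expr2.
Qed.

Section Value.
Variables (Sigma : finType) (A : QA Sigma) (w : nat -> Sigma).

Let overlaps psi ns :=
  [set u : RR | exists i : nat, u = abs2 (inner psi (run A w (ns i)))].
Let subseq_values psi :=
  [set t : RR | exists ns, strictly_increasing ns /\ t = inf (overlaps psi ns)].
Let values := [set r : RR | exists psi : 'cV[CC]_(Defs.dim A),
  [/\ in_F psi, inner psi psi = 1 & r = sup (subseq_values psi)]].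

Let fNDE : fND A w = sup values. Proof. by []. Qed.

Let subseq_values_ne psi : subseq_values psi !=set0.
Proof. by exists (inf (overlaps psi id)), id; split => [i|] //. Qed.

Let inf_overlaps_ge psi ns c :
  (forall i, c <= abs2 (inner psi (run A w (ns i)))) -> c <= inf (overlaps psi ns).
Proof.
by move=> h; apply: lb_le_inf => [|u [i ->]] //; exists (abs2 (inner psi (run A w (ns 0)))), 0%N.
Qed.

Let inf_overlaps_le psi ns i : inf (overlaps psi ns) <= abs2 (inner psi (run A w (ns i))).
Proof. by apply: ge_inf; [exists 0 => u [j ->]; exact: abs2_ge0 | exists i]. Qed.

Let inf_overlaps_le1 psi ns : inner psi psi = 1 -> inf (overlaps psi ns) <= 1.
Proof.
by move=> h; apply: le_trans (inf_overlaps_le _ _ 0) (abs2_inner_le1 h (inner_run _ _ _)).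
Qed.

Let subseq_values_sup psi : inner psi psi = 1 -> has_sup (subseq_values psi).
Proof. by move=> h; split => //; exists 1 => t [ns [_ ->]]; exact: inf_overlaps_le1. Qed.

Let values_ub : ubound values 1.
Proof.
by move=> r [psi [_ h ->]]; apply: ge_sup => // t [ns [_ ->]]; exact: inf_overlaps_le1.
Qed.

Lemma fND_le1 : fND A w <= 1.
Proof.
rewrite fNDE; have [->|/set0P ne] := eqVneq values set0; first by rewrite sup0 ler01.
exact: ge_sup values_ub.
Qed.

Lemma fND_ge_overlap psi ns c : in_F psi -> inner psi psi = 1 -> strictly_increasing ns ->
  (forall i, c <= abs2 (inner psi (run A w (ns i)))) -> c <= fND A w.
Proof.
move=> hF h hns hc; apply: le_trans (inf_overlaps_ge hc) _.
apply: le_trans (_ : sup (subseq_values psi) <= _).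
  by apply: sup_upper_bound; [exact: subseq_values_sup | exists ns].
by apply: sup_upper_bound; [split; [exists (sup (subseq_values psi)), psi | exists 1] | exists psi].
Qed.

Lemma fND_ge0 : 0 <= fND A w.
Proof.
rewrite fNDE; have [->|/set0P [r [psi [hF h _]]]] := eqVneq values set0; first by rewrite sup0.
rewrite -fNDE; apply: (fND_ge_overlap (ns := id)) hF h _ _ => // i.
exact: abs2_ge0.
Qed.

Lemma fND_gt_overlap lam : 0 <= lam -> lam < fND A w ->
  exists psi ns t, [/\ in_F psi, inner psi psi = 1, strictly_increasing ns, lam < t &
    forall i, t <= abs2 (inner psi (run A w (ns i)))].
Proof.
move=> lam0; rewrite fNDE; have [->|/set0P ne] := eqVneq values set0.
  by rewrite sup0 ltNge lam0.
move=> /(sup_gt ne) [_ [psi [hF h ->]]] /(sup_gt (subseq_values_ne psi)).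
move=> [_ [ns [hns ->]]] lt_lam.
by exists psi, ns, (inf (overlaps psi ns)); split => // i; exact: inf_overlaps_le.
Qed.

Lemma fND_le y : 0 <= y ->
  (forall psi ns t, in_F psi -> inner psi psi = 1 -> strictly_increasing ns ->
     (forall i, t <= abs2 (inner psi (run A w (ns i)))) -> t <= y) ->
  fND A w <= y.
Proof.
move=> y0 hy; apply: lt_le => x; have [x0 _|x0] := ltP x 0; first exact: lt_le_trans y0.
move=> /(fND_gt_overlap x0) [psi [ns [t [hF h hns xt ht]]]].
exact: lt_le_trans (hy _ _ _ hF h hns ht).
Qed.

End Value.

Lemma strictly_increasing_leq ns : strictly_increasing ns -> forall i, (ns 0 + i <= ns i)%N.
Proof. by move=> hns; elim=> [|i IH]; rewrite ?addn0 // addnS; exact: leq_ltn_trans IH (hns i). Qed.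

Lemma strictly_increasing_comp ns ms :
  strictly_increasing ns -> strictly_increasing ms -> strictly_increasing (ns \o ms).
Proof.
move=> hns hms i; have ns_mono : {homo ns : j k / (j < k)%N}.
  by apply: homo_ltn hns; exact: ltn_trans.
exact: ns_mono (hms i).
Qed.

Lemma subseq_infinitely_often (Q : nat -> Prop) :
  (forall N, exists i, (N <= i)%N /\ Q i) ->
  exists ns, strictly_increasing ns /\ forall j, Q (ns j).
Proof.
move=> H; have [next hnext] := choice H.
pose ns := fix ns j := if j is j'.+1 then next (ns j').+1 else next 0%N.
exists ns; split => [i|[|j]]; [exact: (hnext _).1 | exact: (hnext _).2 | exact: (hnext _).2].
Qed.

Lemma constant_subseq (T : finType) (f : nat -> T) :
  exists ns, strictly_increasing ns /\ forall j, f (ns j) = f (ns 0%N).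
Proof.
suff [c hc] : exists c, forall N, exists i, (N <= i)%N /\ f i = c.
  by have [ns [hns fc]] := subseq_infinitely_often hc; exists ns; split => // j; rewrite !fc.
apply: contrapT => no_rec.
have {}no_rec c : exists N, forall i, (N <= i)%N -> f i <> c.
  apply: contrapT => hc; apply: no_rec; exists c => N; apply: contrapT => hN.
  by apply: hc; exists N => i Ni fi; apply: hN; exists i.
have [bound hbound] := choice no_rec; pose M := (\max_(c : T) bound c)%N.
exact: (hbound (f M) M) (leq_bigmax (f M)) erefl.
Qed.

(* [cellr del] cuts [-1, 1] into finitely many intervals of length [del]; a
   pigeonhole over these cells replaces Bolzano-Weierstrass. *)
Section Grid.
Variable del : RR.
Hypothesis del0 : 0 < del.

Definition cellr (r : RR) : 'I_(Num.truncn (2 / del)).+1 := inord (Num.truncn ((r + 1) / del)).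

Lemma cellr_close r s : -1 <= r <= 1 -> -1 <= s <= 1 -> cellr r = cellr s -> `|r - s| < del.
Proof.
have in_range x : -1 <= x <= 1 -> (Num.truncn ((x + 1) / del) <= Num.truncn (2 / del))%N.
  move=> /andP [x1 x2]; rewrite truncn_le_nat.
  by apply: le_lt_trans (truncnS_gt _); rewrite ler_pM2r ?invr_gt0 //; lra.
have pos x : -1 <= x <= 1 -> 0 <= (x + 1) / del.
  by move=> /andP [x1 _]; apply: divr_ge0; [lra | exact: ltW].
move=> hr hs /(congr1 val); rewrite /= !inordK ?ltnS ?in_range // => same.
have /andP [r1 r2] := truncn_itv (pos _ hr); have /andP [s1 s2] := truncn_itv (pos _ hs).
rewrite same -natr1 in r1 r2; rewrite -natr1 in s2.
have -> : r - s = ((r + 1) / del - (s + 1) / del) * del by field; rewrite gt_eqF.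
rewrite normrM (gtr0_norm del0) -ltr_pdivlMr // mulfV ?gt_eqF // ltr_norml.
by apply/andP; split; lra.
Qed.

Definition cellc (x : CC) := (cellr (complex.Re x), cellr (complex.Im x)).

Lemma cellc_close (x y : CC) : abs2 x <= 1 -> abs2 y <= 1 -> cellc x = cellc y ->
  abs2 (x - y) <= 2 * del ^+ 2.
Proof.
move=> /abs2_le1_parts [x1 x2] /abs2_le1_parts [y1 y2] [e1 e2].
have := cellr_close x1 y1 e1; have := cellr_close x2 y2 e2.
rewrite abs2E; case: x {x1 x2 e1 e2} => ? ?; case: y {y1 y2} => ? ? /=.
by rewrite !ltr_norml => /andP [? ?] /andP [? ?]; nra.
Qed.

End Grid.

Lemma normc_le_sqr (x : CC) r : 0 <= r -> abs2 x <= r ^+ 2 -> normc x <= r.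
Proof. by move=> r0; rewrite /abs2 ler_pXn2r // nnegrE normc_ge0. Qed.

Lemma abs2_close (x y : CC) eta :
  normc x <= 1 -> normc (x - y) <= eta -> abs2 x - 2 * eta <= abs2 y.
Proof.
move=> x1 xy; apply: le_trans (abs2_sub_ge x y); rewrite lerD2l lerN2 -mulrA ler_pM2l //.
by have := normc_ge0 x; have := normc_ge0 (x - y); nra.
Qed.

Lemma complex_cluster (z : nat -> CC) del : 0 < del -> (forall i, abs2 (z i) <= 1) ->
  exists ns, strictly_increasing ns /\ forall j, normc (z (ns j) - z (ns 0%N)) <= del.
Proof.
move=> del0 z1; have del2 : 0 < del / 2 by rewrite divr_gt0.
have [ns [hns same]] := constant_subseq (fun i => cellc (del / 2) (z i)).
exists ns; split => // j; apply: normc_le_sqr (ltW del0) _.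
apply: le_trans (cellc_close del2 (z1 _) (z1 _) (same j)) _.
have -> : 2 * (del / 2) ^+ 2 = del ^+ 2 / 2 by field.
by rewrite ler_pdivrMr // ler_peMr ?sqr_ge0 // ler1n.
Qed.

Lemma vector_cluster d (x : nat -> 'cV[CC]_d) e : 0 < e -> (forall k, inner (x k) (x k) = 1) ->
  exists ns, strictly_increasing ns /\ forall j, norm2 (x (ns 0%N) - x (ns j)) <= e.
Proof.
move=> e0 x1; set del := Num.sqrt (e / (2 * d.+1%:R)).
have del0 : 0 < del by rewrite sqrtr_gt0 divr_gt0 // mulr_gt0.
have coord1 k l : abs2 (x k l 0) <= 1 by rewrite -(norm2_unit (x1 k)) abs2_coord_le.
have [ns [hns same]] := constant_subseq (fun k => [ffun l => cellc del (x k l 0)]).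
exists ns; split => // j.
have close l : abs2 ((x (ns 0%N) - x (ns j)) l 0) <= 2 * del ^+ 2.
  rewrite !mxE; apply: cellc_close => //.
  by have /ffunP /(_ l) := same j; rewrite !ffunE => ->.
apply: le_trans (ler_sum _ (fun l _ => close l)) _.
rewrite sumr_const card_ord sqr_sqrtr ?divr_ge0 ?mulr_ge0 ?(ltW e0) // -[_ *+ d]mulr_natr.
have -> : 2 * (e / (2 * d.+1%:R)) * d%:R = e * (d%:R / d.+1%:R) :> RR.
  by field; rewrite addrC natr1 pnatr_eq0.
by rewrite ler_piMr ?(ltW e0) // ler_pdivrMr ?ltr0Sn // mul1r ler_nat.
Qed.

Lemma iter_mulmxB d (V : 'M[CC]_d) n (y z : 'cV[CC]_d) :
  iter n (mulmx V) (y - z) = iter n (mulmx V) y - iter n (mulmx V) z.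
Proof. by elim: n => //= n ->; rewrite mulmxBr. Qed.

Lemma norm2_iter_unitary d (V : 'M[CC]_d) n (y : 'cV[CC]_d) :
  unitary V -> norm2 (iter n (mulmx V) y) = norm2 y.
Proof.
move=> hV; suff : inner (iter n (mulmx V) y) (iter n (mulmx V) y) = inner y y.
  by rewrite !inner_norm2 => -[].
by elim: n => //= n IH; rewrite inner_unitary.
Qed.

(* Two iterates [V^i t] and [V^j t] are close, hence so are [t] and
   [V^(j - i) t], since [V^i] is an isometry. *)
Lemma unitary_recurrence d (V : 'M[CC]_d) (t psi : 'cV[CC]_d) e :
  unitary V -> inner t t = 1 -> inner psi psi = 1 -> 0 < e -> forall N,
  exists k, (N <= k)%N /\ abs2 (inner psi t) - e <= abs2 (inner psi (iter k (mulmx V) t)).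
Proof.
move=> hV ht hpsi e0 N; pose x k := iter k (mulmx V) t.
have eta0 : 0 < e / 2 by rewrite divr_gt0.
have x_unit k : inner (x k) (x k) = 1.
  by rewrite inner_norm2 norm2_iter_unitary // -inner_norm2.
have [m [hm close]] := vector_cluster (exprn_gt0 2 eta0) x_unit.
have leq_m := strictly_increasing_leq hm N.
exists (m N - m 0)%N; split; first lia.
have back : iter (m 0%N) (mulmx V) (t - x (m N - m 0)%N) = x (m 0%N) - x (m N).
  by rewrite iter_mulmxB /x -iterD subnKC //; lia.
have small : normc (inner psi t - inner psi (x (m N - m 0)%N)) <= e / 2.
  rewrite -innerBr; apply: normc_inner_small => //.
  by rewrite -(norm2_iter_unitary (m 0%N) _ hV) back.
have := abs2_close (normc_le1 (abs2_inner_le1 hpsi ht)) small.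
by have -> : 2 * (e / 2) = e by field.
Qed.

Lemma in_FZ Sigma (A : QA Sigma) k (u : 'cV[CC]_(Defs.dim A)) : in_F u -> in_F (k *: u).
Proof. by rewrite /in_F linearZ; exact: scalemx_sub. Qed.

Lemma in_F0 Sigma (A : QA Sigma) : in_F (0 : 'cV[CC]_(Defs.dim A)).
Proof. by rewrite /in_F trmx0 sub0mx. Qed.

Lemma inner_col_mx_scalar_self m (u : 'cV[CC]_m) (c : CC) :
  inner (col_mx u c%:M) (col_mx u c%:M) = (norm2 u + abs2 c)%:C.
Proof. by rewrite inner_col_mx inner_norm2 inner_scalar mulJc rmorphD. Qed.

Lemma col_mx_scalar_dsubmx m (u : 'cV[CC]_(m + 1)) : u = col_mx (usubmx u) (dsubmx u 0 0)%:M.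
Proof. by rewrite -mx11_scalar vsubmxK. Qed.

Section Pad.
Variables (Sigma : finType) (A : QA Sigma) (a b : RR) (accept : bool).
Hypothesis hab : a ^+ 2 + b ^+ 2 = 1.

Definition pad_s0 : 'cV[CC]_(Defs.dim A + 1) := col_mx (a%:C *: s0 A) (b%:C)%:M.
Definition pad_U (x : Sigma) : 'M[CC]_(Defs.dim A + 1) := block_mx (U A x) 0 0 1%:M.
Definition pad_F : 'M[CC]_(Defs.dim A + 1) := block_mx (Fsp A) 0 0 (accept%:R : CC)%:M.

Lemma pad_s0_unit : inner pad_s0 pad_s0 = 1.
Proof.
rewrite inner_col_mx innerZl innerZr s0_unit mulr1 inner_scalar !conjc_real -!rmorphM -rmorphD.
by rewrite -!expr2 hab.
Qed.

Lemma pad_U_unitary x : unitary (pad_U x).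
Proof. exact/unitary_block1/U_unitary. Qed.

Definition pad : QA Sigma := @Build_QA Sigma _ pad_s0 pad_U pad_F pad_s0_unit pad_U_unitary.

Lemma run_pad w n : run pad w n = col_mx (a%:C *: run A w n) (b%:C)%:M.
Proof.
elim: n => [|n IH] //=; rewrite IH /= /pad_U mul_block_col.
by rewrite !mul0mx addr0 add0r mul1mx scalemxAr.
Qed.

Lemma in_F_pad (u : 'cV[CC]_(Defs.dim A)) (c : CC) :
  in_F (A := pad) (col_mx u c%:M) <-> in_F u /\ (accept || (c == 0)).
Proof.
rewrite /in_F /= /pad_F tr_col_mx tr_scalar_mx; split.
  move=> /submxP [D]; rewrite -(hsubmxK D) mul_row_block !mulmx0 addr0 add0r.
  move=> /eq_row_mx [-> hc]; split; first exact: submxMl.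
  case: accept hc => //= /matrixP /(_ 0 0); rewrite mul_mx_scalar scale0r !mxE /=.
  by move=> <-.
move=> [/submxP [D hD] hc]; apply/submxP; exists (row_mx D c%:M).
rewrite mul_row_block !mulmx0 addr0 add0r -hD; congr row_mx.
by case: accept hc => /= [_|/eqP ->]; rewrite ?mulmx1 // -scalar_mxM mulr0.
Qed.

Lemma inner_pad_run (u : 'cV[CC]_(Defs.dim A)) (c : CC) w n :
  inner (col_mx u c%:M) (run pad w n) = a%:C * inner u (run A w n) + conjc c * b%:C.
Proof. by rewrite run_pad inner_col_mx innerZr inner_scalar. Qed.

End Pad.

Section PadValue.
Variables (Sigma : finType) (A : QA Sigma) (a b : RR) (w : nat -> Sigma).
Hypothesis hab : a ^+ 2 + b ^+ 2 = 1.
Hypothesis a0 : 0 < a.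
Hypothesis b0 : 0 < b.

Let a2_gt0 : 0 < a ^+ 2. Proof. exact: exprn_gt0. Qed.

Lemma fND_pad_reject : fND (pad A false hab) w = a ^+ 2 * fND A w.
Proof.
apply/le_anti/andP; split.
  apply: fND_le => [|psi ns t]; first by rewrite mulr_ge0 ?sqr_ge0 ?fND_ge0.
  rewrite [psi]col_mx_scalar_dsubmx in_F_pad inner_col_mx_scalar_self.
  move=> [hF /eqP ->]; rewrite abs20 addr0 -inner_norm2 => hu hns ht.
  rewrite -ler_pdivrMl //; apply: fND_ge_overlap hF hu hns _ => i.
  by rewrite ler_pdivrMl // -abs2R -abs2M; move: (ht i); rewrite inner_pad_run conjc0 mul0r addr0.
rewrite -ler_pdivlMl //; apply: fND_le => [|psi ns t hF hu hns ht].
  by rewrite mulr_ge0 ?invr_ge0 ?fND_ge0 ?sqr_ge0.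
rewrite ler_pdivlMl //; apply: (@fND_ge_overlap _ (pad A false hab) w (col_mx psi 0%:M) ns) => //.
- by apply/in_F_pad; rewrite eqxx orbT.
- by rewrite inner_col_mx_scalar_self abs20 addr0 norm2_unit.
by move=> i; rewrite inner_pad_run conjc0 mul0r addr0 abs2M abs2R ler_pM2l.
Qed.

Lemma fND_pad_accept_le : fND (pad A true hab) w <= a ^+ 2 * fND A w + b ^+ 2.
Proof.
apply: fND_le => [|psi ns t]; first by rewrite addr_ge0 ?sqr_ge0 // mulr_ge0 ?sqr_ge0 // fND_ge0.
rewrite [psi]col_mx_scalar_dsubmx in_F_pad inner_col_mx_scalar_self.
set u := usubmx psi; set c := dsubmx psi 0 0.
move=> -[hF _] [hu] hns ht.
have [u0|u_ne0] := eqVneq u 0.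
  move: hu (ht 0%N); rewrite inner_pad_run u0 inner0l mulr0 add0r abs2M abs2J abs2R.
  rewrite norm2_0 add0r => ->; rewrite mul1r => tb.
  exact: ler_wpDl (mulr_ge0 (sqr_ge0 a) (fND_ge0 A w)) tb.
have N0 : 0 < norm2 u by rewrite lt_def norm2_eq0 u_ne0 norm2_ge0.
pose u1 := (Num.sqrt (norm2 u))^-1%:C *: u.
have hu1 : inner u1 u1 = 1.
  by rewrite inner_norm2 norm2Z abs2R exprVn sqr_sqrtr ?norm2_ge0 // mulVf // gt_eqF.
have u_u1 s : inner u s = (Num.sqrt (norm2 u))%:C * inner u1 s.
  by rewrite innerZl conjc_real mulrA -rmorphM mulfV ?mul1r // gt_eqF // sqrtr_gt0.
have bound i : t <= a ^+ 2 * abs2 (inner u1 (run A w (ns i))) + b ^+ 2.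
  apply: le_trans (ht i) _; rewrite inner_pad_run u_u1 mulrCA.
  apply: le_trans (abs2_dot2_le _ _ _ _) _.
  by rewrite abs2J !abs2R sqr_sqrtr ?norm2_ge0 // hu mul1r abs2M abs2R.
rewrite -lerBlDr -ler_pdivrMl //; apply: fND_ge_overlap (in_FZ _ hF) hu1 hns _ => i.
by rewrite ler_pdivrMl // lerBlDr bound.
Qed.

(* The extra coordinate of the witness is aligned with the phase of [z0]. *)
Lemma pad_accept_witness (psi : 'cV[CC]_(Defs.dim A)) (z0 : CC) :
  in_F psi -> inner psi psi = 1 ->
  exists phi, [/\ in_F (A := pad A true hab) phi, inner phi phi = 1 &
    forall n, a ^+ 2 * abs2 z0 + b ^+ 2 - 2 * a ^+ 2 * normc z0 * normc (inner psi (run A w n) - z0)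
              <= abs2 (inner phi (run (pad A true hab) w n))].
Proof.
move=> hF hu; set K := a ^+ 2 * abs2 z0 + b ^+ 2.
have K0 : 0 < K.
  by apply: ltr_wpDl; [exact: mulr_ge0 (sqr_ge0 a) (abs2_ge0 z0) | exact: exprn_gt0].
set s := Num.sqrt K; have s0 : 0 < s by rewrite sqrtr_gt0.
have sK : s ^+ 2 = K by rewrite sqr_sqrtr // ltW.
exists (col_mx (((a / s)%:C * z0) *: psi) ((b / s)%:C)%:M); split.
- by apply/in_F_pad; split => //; exact: in_FZ.
- rewrite inner_col_mx_scalar_self norm2Z (norm2_unit hu) mulr1 abs2M !abs2R; congr (_%:C).
  by rewrite !expr_div_n mulrAC -mulrDl -/K -sK divff // gt_eqF // exprn_gt0.
move=> n; set z := inner psi (run A w n).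
have shift : s%:C - inner (col_mx (((a / s)%:C * z0) *: psi) ((b / s)%:C)%:M)
                           (run (pad A true hab) w n)
             = (a ^+ 2 / s)%:C * (conjc z0 * (z0 - z)).
  rewrite inner_pad_run innerZl -/z; have sE : s = K / s by rewrite -sK expr2 mulfK // gt_eqF.
  rewrite {1}sE /K; case: (z0) (z) => x0 y0 [x y]; rewrite abs2E /=.
  by apply/eqP; rewrite eq_complex /=; apply/andP; split; apply/eqP; field; rewrite gt_eqF.
have := abs2_sub_ge s%:C (inner (col_mx (((a / s)%:C * z0) *: psi) ((b / s)%:C)%:M)
                                 (run (pad A true hab) w n)).
rewrite shift abs2R sK !Normc.normcM !normcR ?(ltW s0) ?divr_ge0 ?sqr_ge0 ?(ltW s0) //.
rewrite normc_conj -[z0 - z]opprB normcN.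
set d := normc (z - z0).
by have -> : 2 * s * (a ^+ 2 / s * (normc z0 * d)) = 2 * a ^+ 2 * normc z0 * d
  by field; rewrite gt_eqF.
Qed.

Lemma fND_pad_accept_ge : a ^+ 2 * fND A w + b ^+ 2 <= fND (pad A true hab) w.
Proof.
have b2_le : b ^+ 2 <= fND (pad A true hab) w.
  apply: (@fND_ge_overlap _ (pad A true hab) w (col_mx 0 1%:M) id) => //.
  - by apply/in_F_pad; split; [exact: in_F0 | rewrite orTb].
  - by rewrite inner_col_mx_scalar_self norm2_0 add0r (abs2R 1) expr1n.
  by move=> i; rewrite inner_pad_run inner0l mulr0 add0r conjc1 mul1r abs2R.
rewrite -lerBrDr -ler_pdivlMl //; apply: fND_le => [|psi ns t hF hu hns ht].
  by rewrite mulr_ge0 ?invr_ge0 ?subr_ge0 ?sqr_ge0.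
rewrite ler_pdivlMl // lerBrDr; apply/ler_addgt0Pr => e e_gt0.
have z1 i : abs2 (inner psi (run A w (ns i))) <= 1 by exact: abs2_inner_le1 hu (inner_run _ _ _).
have [m [hm close]] := complex_cluster (divr_gt0 e_gt0 (ltr0Sn _ 1)) z1.
set z0 := inner psi (run A w (ns (m 0%N))).
have [phi [hFphi hphi phi_ge]] := pad_accept_witness z0 hF hu.
rewrite -lerBlDr; apply: (fND_ge_overlap hFphi hphi (strictly_increasing_comp hns hm)) => j /=.
apply: le_trans (phi_ge _).
have a2_le1 : a ^+ 2 <= 1 by rewrite -hab lerDl sqr_ge0.
have z0_le1 : normc z0 <= 1 by exact: normc_le1 (z1 _).
have near_z0 : a ^+ 2 * normc z0 * normc (inner psi (run A w (ns (m j))) - z0) <= e / 2.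
  have := close j; have := normc_ge0 (inner psi (run A w (ns (m j))) - z0).
  have := normc_ge0 z0; have := sqr_ge0 a.
  set A2 := a ^+ 2; set Z := normc z0; set D := normc _ => A20 Z0 D0 De.
  have AZ : A2 * Z <= 1 * 1 by exact: ler_pM A20 Z0 a2_le1 z0_le1.
  by apply: le_trans (ler_pM (mulr_ge0 A20 Z0) D0 AZ De) _; rewrite !mul1r.
have : a ^+ 2 * t <= a ^+ 2 * abs2 z0 by rewrite ler_pM2l // ht.
lra.
Qed.

Lemma fND_pad_accept : fND (pad A true hab) w = a ^+ 2 * fND A w + b ^+ 2.
Proof. by apply/le_anti; rewrite fND_pad_accept_le fND_pad_accept_ge. Qed.
End PadValue.

Lemma sqr_sqrt_pair (p : RR) : 0 <= p <= 1 -> Num.sqrt p ^+ 2 + Num.sqrt (1 - p) ^+ 2 = 1.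
Proof. by move=> /andP [p0 p1]; rewrite !sqr_sqrtr ?subr_ge0 // addrC subrK. Qed.

Lemma fND_rescale Sigma (A : QA Sigma) (mu lam : RR) : 0 <= mu <= 1 -> 0 < lam < 1 ->
  exists (A' : QA Sigma) (k : RR), 0 < k /\ forall w, fND A' w - lam = k * (fND A w - mu).
Proof.
move=> /andP [mu0 mu1] /andP [lam0 lam1]; have [le_lam_mu|lt_mu_lam] := lerP lam mu.
  have mu_gt0 : 0 < mu := lt_le_trans lam0 le_lam_mu.
  set p := lam / mu; have p0 : 0 < p by rewrite divr_gt0.
  have p01 : 0 <= p <= 1 by rewrite ltW //= ler_pdivrMr // mul1r.
  exists (pad A false (sqr_sqrt_pair p01)), p; split => // w.
  by rewrite fND_pad_reject ?sqrtr_gt0 // sqr_sqrtr ?(ltW p0) // mulrBr /p mulfVK // gt_eqF.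
have mu_lt1 : mu < 1 := lt_trans lt_mu_lam lam1.
set p := (1 - lam) / (1 - mu); have p0 : 0 < p by rewrite divr_gt0 ?subr_gt0.
have p1 : p < 1 by rewrite ltr_pdivrMr ?subr_gt0 // mul1r ltrD2l ltrN2.
have p01 : 0 <= p <= 1 by rewrite !ltW.
exists (pad A true (sqr_sqrt_pair p01)), p; split => // w.
rewrite fND_pad_accept ?sqrtr_gt0 ?subr_gt0 // !sqr_sqrtr ?subr_ge0 ?(ltW p0) ?(ltW p1) //.
by rewrite /p; field; rewrite subr_eq0 gt_eqF.
Qed.

Lemma QBA_class_gt_sub Sigma (mu lam : RR) : 0 <= mu <= 1 -> 0 < lam < 1 ->
  QBA_class (@lang_gt Sigma mu) `<=` QBA_class (@lang_gt Sigma lam).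
Proof.
move=> hmu hlam _ [A ->]; have [A' [k [k0 hk]]] := fND_rescale A hmu hlam.
exists A'; apply: eq_set => w; apply/propext.
by rewrite -[mu < _]subr_gt0 -[lam < _]subr_gt0 hk pmulr_rgt0.
Qed.

Lemma QBA_class_ge_sub Sigma (mu lam : RR) : 0 <= mu <= 1 -> 0 < lam < 1 ->
  QBA_class (@lang_ge Sigma mu) `<=` QBA_class (@lang_ge Sigma lam).
Proof.
move=> hmu hlam _ [A ->]; have [A' [k [k0 hk]]] := fND_rescale A hmu hlam.
exists A'; apply: eq_set => w; apply/propext.
by rewrite -[mu <= _]subr_ge0 -[lam <= _]subr_ge0 hk pmulr_rge0.
Qed.

Lemma lang_ge1 Sigma (A : QA Sigma) : lang_ge 1 A = lang_eq1 A.
Proof.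
apply: eq_set => w; apply/propext; split => [h|->] //.
by apply/le_anti; rewrite h fND_le1.
Qed.

Definition prefix_const Sigma (w : nat -> Sigma) n b : nat -> Sigma :=
  fun k => if (k < n)%N then w k else b.

Lemma run_prefix_const Sigma (B : QA Sigma) w n b k :
  run B (prefix_const w n b) (n + k) = iter k (mulmx (U B b)) (run B w n).
Proof.
elim: k => [|k IH]; last by rewrite addnS /= IH /prefix_const ltnNge leq_addr.
rewrite addn0; suff agree m : (m <= n)%N -> run B (prefix_const w n b) m = run B w m.
  exact: agree.
by elim: m => // m IHm lt_mn /=; rewrite IHm ?(ltnW lt_mn) // /prefix_const lt_mn.
Qed.

Lemma fND_prefix_const_gt Sigma (B : QA Sigma) w lam : 0 <= lam -> lam < fND B w ->
  exists2 n, (0 < n)%N & forall b, lam < fND B (prefix_const w n b).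
Proof.
move=> lam0 /(fND_gt_overlap lam0) [psi [ns [t [hF hu hns lt_lam ht]]]].
exists (ns 1%N) => [|b]; first by have := strictly_increasing_leq hns 1; lia.
have e_gt0 : 0 < (t - lam) / 2 by rewrite divr_gt0 // subr_gt0.
have [ks [hks near]] :=
  subseq_infinitely_often (unitary_recurrence (U_unitary B b) (inner_run B w (ns 1%N)) hu e_gt0).
apply: lt_le_trans (_ : t - (t - lam) / 2 <= _); first lra.
apply: (fND_ge_overlap (ns := fun i => ns 1%N + ks i)%N) hF hu _ _ => i.
  by rewrite ltn_add2l.
by rewrite run_prefix_const; apply: le_trans (near i); rewrite lerD2r; exact: ht.
Qed.

Lemma ord2P (i : 'I_2) : i = 0 \/ i = 1.
Proof. by case: i => [[|[|k]] lt_i] //; [left|right]; apply/val_inj. Qed.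

Lemma sum_ord2 (V : nmodType) (F : 'I_2 -> V) : \sum_(i < 2) F i = F 0 + F 1.
Proof. by rewrite !big_ord_recl big_ord0 addr0; congr (F _ + F _); exact/val_inj. Qed.

(* Rotation by an angle [theta] with [cos theta = 3/5]; [theta / pi] is irrational,
   which shows up below as the invariant [(3 + 4i)^n = 3 + 4i mod 5]. *)
Definition rot : 'M[CC]_2 :=
  \matrix_(i, j) (if i == j then 3 / 5 else if i == 0 then - (4 / 5) else 4 / 5 : RR)%:C.

Definition ket0 : 'cV[CC]_2 := delta_mx 0 0.

Lemma rot_unitary : unitary rot.
Proof.
apply/matrixP => i j; rewrite !mxE sum_ord2 !mxE.
by case: (ord2P i) => ->; case: (ord2P j) => -> /=;
  apply/eqP; rewrite eq_complex /=; apply/andP; split; apply/eqP; field.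
Qed.

Lemma ket0_unit : inner ket0 ket0 = 1.
Proof.
rewrite innerE sum_ord2 !mxE /=.
by apply/eqP; rewrite eq_complex /=; apply/andP; split; apply/eqP; ring.
Qed.

Fixpoint rot_num (n : nat) : int * int :=
  if n is n'.+1 then let: (x, y) := rot_num n' in (3 * x - 4 * y, 4 * x + 3 * y)
  else (1, 0).

Lemma iter_rot n : iter n (mulmx rot) ket0 =
  \col_i (((if i == 0 then (rot_num n).1 else (rot_num n).2)%:~R / 5 ^+ n : RR)%:C).
Proof.
elim: n => [|n IH].
  by apply/matrixP => i j; rewrite !mxE expr0 divr1; case: (ord2P i) => -> //=; rewrite (ord1 j).
rewrite /= IH; case: (rot_num n) => x y /=.
apply/matrixP => i j; rewrite !mxE sum_ord2 !mxE /=.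
have p5 : (5 ^+ n : RR) != 0 by rewrite expf_neq0 // pnatr_eq0.
case: (ord2P i) => -> /=; rewrite ?(rmorphB, rmorphD, rmorphM) /=;
  apply/eqP; rewrite eq_complex /=; apply/andP; split; apply/eqP; rewrite exprS; field; exact: p5.
Qed.

Lemma rot_num_mod5 n : (0 < n)%N -> exists k l : int, rot_num n = (3 + 5 * k, 4 + 5 * l).
Proof.
elim: n => [//|[|n] IH] _; first by exists 0, 0.
have [k [l /= e]] := IH isT; rewrite e.
by exists (3 * k - 4 * l - 2), (4 + 4 * k + 3 * l); congr pair; ring.
Qed.

Lemma rot_coord1_neq0 n : (0 < n)%N -> (iter n (mulmx rot) ket0) 1 0 != 0.
Proof.
move=> n0; rewrite iter_rot mxE /=; have [k [l ->]] := rot_num_mod5 n0.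
have l_neq0 : (4 + 5 * l : int) != 0 by lia.
rewrite eq_complex /= eqxx andbT mulf_eq0 negb_or intr_eq0 l_neq0 /=.
by rewrite invr_eq0 expf_eq0 pnatr_eq0 andbF.
Qed.

Lemma rot_coord0_lt1 n : (0 < n)%N -> abs2 ((iter n (mulmx rot) ket0) 0 0) < 1.
Proof.
move=> n0; have : norm2 (iter n (mulmx rot) ket0) = 1.
  by rewrite norm2_iter_unitary ?norm2_unit ?ket0_unit //; exact: rot_unitary.
rewrite /norm2 sum_ord2 => <-; rewrite ltrDl lt_def abs2_eq0 rot_coord1_neq0 //.
exact: abs2_ge0.
Qed.

Section Rotation.
Variables (Sigma : finType) (a : Sigma).

Definition rot_U (x : Sigma) : 'M[CC]_2 := if x == a then rot else 1%:M.

Lemma rot_U_unitary x : unitary (rot_U x).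
Proof. by rewrite /rot_U; case: eqP => _; [exact: rot_unitary | exact: unitary1]. Qed.

Definition rot_QA : QA Sigma := @Build_QA Sigma 2 ket0 rot_U (delta_mx 0 0) ket0_unit rot_U_unitary.

Lemma in_F_ket0 : in_F (A := rot_QA) ket0.
Proof. by apply/submxP; exists (delta_mx 0 0); rewrite trmx_delta mul_delta_mx. Qed.

Lemma abs2_inner_rot (psi v : 'cV[CC]_2) : in_F (A := rot_QA) psi -> inner psi psi = 1 ->
  abs2 (inner psi v) = abs2 (v 0 0).
Proof.
move=> /submxP [D] /matrixP /(_ 0 1); rewrite !mxE sum_ord2 !mxE /= !mulr0 addr0 => psi1.
move=> /norm2_unit; rewrite innerE /norm2 !sum_ord2 psi1 abs20 addr0 conjc0 mul0r addr0.
by rewrite abs2M abs2J => ->; rewrite mul1r.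
Qed.

Lemma run_rot_const n : run rot_QA (fun _ => a) n = iter n (mulmx rot) ket0.
Proof. by elim: n => //= n ->; rewrite /rot_U eqxx. Qed.

Lemma fND_rot_const : fND rot_QA (fun _ => a) = 1.
Proof.
apply/le_anti; rewrite fND_le1 /=; apply/ler_addgt0Pr => e e_gt0.
have [ns [hns near]] :=
  subseq_infinitely_often (unitary_recurrence rot_unitary ket0_unit ket0_unit e_gt0).
rewrite -lerBlDr; apply: fND_ge_overlap in_F_ket0 ket0_unit hns _ => i.
by move: (near i); rewrite run_rot_const ket0_unit (abs2R 1) expr1n.
Qed.

Lemma fND_rot_prefix_const_lt1 b n : b != a -> (0 < n)%N ->
  fND rot_QA (prefix_const (fun _ => a) n b) < 1.
Proof.
move=> ba n0; apply: le_lt_trans (rot_coord0_lt1 n0).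
apply: fND_le => [|psi ns t hF hu hns ht]; first exact: abs2_ge0.
have n_le : (n <= ns n)%N := leq_trans (leq_addl _ _) (strictly_increasing_leq hns n).
have := ht n; rewrite abs2_inner_rot // -(subnKC n_le).
rewrite run_prefix_const [U _ b]/(rot_U b) /rot_U (negbTE ba) run_rot_const.
by elim: (_ - n)%N => //= k IH; rewrite mul1mx.
Qed.

End Rotation.

Lemma QBA_class_eq1_not_sub_gt (Sigma : finType) :
  (1 < #|Sigma|)%N -> forall lam : RR, 0 <= lam < 1 ->
  ~ (QBA_class (@lang_eq1 Sigma) `<=` QBA_class (@lang_gt Sigma lam)).
Proof.
move=> Sigma_gt1 lam /andP [lam0 lam1] sub_eq1_gt.
have [a [b [_ _ ab]]] := card_gt1P Sigma_gt1.
have [B eq1_gt] := sub_eq1_gt _ (ex_intro _ (rot_QA a) erefl).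
have accepts w : (fND (rot_QA a) w = 1) = (lam < fND B w) := congr1 (@^~ w) eq1_gt.
have [n n0 prefix_gt] :
    exists2 n, (0 < n)%N & forall c, lam < fND B (prefix_const (fun _ => a) n c).
  by apply: fND_prefix_const_gt lam0 _; rewrite -accepts fND_rot_const.
have ba : b != a by rewrite eq_sym.
have := prefix_gt b; rewrite -accepts => accepted.
by have := fND_rot_prefix_const_lt1 ba n0; rewrite accepted ltxx.
Qed.

Theorem theorem5 (Sigma : finType) :
  (forall mu lam : RR, 0 < mu < 1 -> 0 < lam < 1 ->
     QBA_class (@lang_gt0 Sigma) `<=` QBA_class (@lang_gt Sigma mu) /\
     QBA_class (@lang_gt Sigma mu) = QBA_class (@lang_gt Sigma lam)) /\
  (forall mu lam : RR, 0 < mu < 1 -> 0 < lam < 1 ->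
     QBA_class (@lang_eq1 Sigma) `<=` QBA_class (@lang_ge Sigma mu) /\
     QBA_class (@lang_ge Sigma mu) = QBA_class (@lang_ge Sigma lam)) /\
  ((1 < #|Sigma|)%N -> forall lam : RR, 0 <= lam < 1 ->
     ~ (QBA_class (@lang_eq1 Sigma) `<=` QBA_class (@lang_gt Sigma lam))).
Proof.
have unit_itv (x : RR) : 0 < x < 1 -> 0 <= x <= 1 by move=> /andP [x0 x1]; rewrite !ltW.
split; [|split]; last exact: QBA_class_eq1_not_sub_gt.
  move=> mu lam hmu hlam; split.
    by apply: (@QBA_class_gt_sub _ 0 mu) hmu; rewrite lexx ler01.
  by apply/seteqP; split; apply: QBA_class_gt_sub; rewrite ?unit_itv.
move=> mu lam hmu hlam; split.
  have -> : @lang_eq1 Sigma = lang_ge 1 by apply/funext => A; rewrite lang_ge1.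
  by apply: QBA_class_ge_sub hmu; rewrite ler01 lexx.
by apply/seteqP; split; apply: QBA_class_ge_sub; rewrite ?unit_itv.
Qed.
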